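(* Let $n\ge1$ and let $\mathbf{v},\mathbf{w}\in\{0,1\}^n$ be coordinates in multi-degree $\mathbf{1}_n$ of $\mathcal{L}^{\mathbb{Q}}_{T^n}(\mathbb{Q}[t];\mathbb{Q})$, and $x,y\in\mathbb{Q}[t]$. In the total complex $\mathrm{Tot}(\mathcal{L}^{\mathbb{Q}}_{T^n}(\mathbb{Q}[t];\mathbb{Q}))$: (1) If $\mathbf{v}$ and $\mathbf{w}$ are both $0$ in the $i$th place for some $1\le i\le n$, then $x_{\mathbf{v}}\cdot y_{\mathbf{w}}\sim0$. In particular, if $\mathbf{v}\neq\mathbf{1}_n$ then $x_{\mathbf{v}}\sim0$. (2) In general, \[x_{\mathbf{v}}\cdot y_{\mathbf{w}}\sim\sum_{\substack{\mathbf{v}'\le\mathbf{v},\ \mathbf{w}'\le\mathbf{w},\\ \mathbf{v}'+\mathbf{w}'=\mathbf{1}_n}}x_{\mathbf{v}'}\cdot y_{\mathbf{w}'},\] the sum over all pairs of coordinates $\mathbf{v}',\mathbf{w}'\in\{0,1\}^n$ that are place-wise no greater than $\mathbf{v}$, $\mathbf{w}$ respectively and take the value $1$ in complementary places. (3) For $k\ge1$, \[(t^k)_{\mathbf{1}_n}\sim\sum_{\substack{\mathbf{w}_1,\dots,\mathbf{w}_k\neq\mathbf{0}_n,\\ \mathbf{w}_1+\cdots+\mathbf{w}_k=\mathbf{1}_n}}\prod_{i=1}^kt_{\mathbf{w}_i},\] the sum over ordered $k$-tuples of nonzero coordinates in $\{0,1\}^n$. In particular, if $k=n$ and $\mathbf{e}_i$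 denotes the coordinate with $1$ in the $i$th place and $0$ elsewhere, then $(t^n)_{\mathbf{1}_n}\sim n!\prod_{i=1}^nt_{\mathbf{e}_i}$; and if $k>n$ then $(t^k)_{\mathbf{1}_n}\sim0$.
   Context: The $n$-chain complex $\mathcal{L}^{\mathbb{Q}}_{T^n}(\mathbb{Q}[t];\mathbb{Q})$ (Loday construction of $\mathbb{Q}[t]$ over the $n$-fold product of simplicial circles, with coefficients in $\mathbb{Q}$ via $t\mapsto0$): in multi-degree $\mathbf{V}\in\mathbb{N}^n$, elements are sums of multi-matrices of size $(v_1+1)\times\cdots\times(v_n+1)$ with entries in $\mathbb{Q}[t]$ at coordinates $\mathbf{v}\ne\mathbf{0}_n$ ($\mathbf{0}\le\mathbf{v}\le\mathbf{V}$) and in $\mathbb{Q}$ at $\mathbf{0}_n$ (tensors over $\mathbb{Q}$). In direction $i$ the slices are indexed by $j\in\{0,\dots,v_i\}$; $d_{i,j}$ ($j<v_i$) multiplies slices $j$ and $j+1$ entrywise, $d_{i,v_i}$ multiplies slice $v_i$ into slice $0$; $\mathrm{d}_i=\sum_j(-1)^jd_{i,j}$ and the total differential is $\mathrm{d}=\sum_i(-1)^{v_1+\cdots+v_{i-1}}\mathrm{d}_i$; $\sim$ means differing by a boundary. $\mathbf{0}_n,\mathbf{1}_n$ are constant vectors; for $x\in\mathbb{Q}[t]$, $x_{\mathbf{v}}$ is the multi-matrix with $x$ at $\mathbf{v}$ (its image in $\mathbb{Q}$ if $\mathbf{v}=\mathbf{0}_n$) and $1$ elsewhere, and products such as $x_{\mathbf{v}}\cdot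 y_{\mathbf{w}}$ or $\prod_it_{\mathbf{w}_i}$ are entrywise products of multi-matrices. Sums and inequalities of coordinates are place-wise. *)

From mathcomp Require Import all_boot all_algebra.
From mathcomp Require Import mpoly.
Set Implicit Arguments. Unset Strict Implicit. Unset Printing Implicit Defensive.
Import GRing.Theory.
Local Open Scope ring_scope.

(* Model of the n-chain complex L^Q_{T^n}(Q[t];Q).                         *)
(* A multi-degree is V : {ffun 'I_n -> nat}.  A coordinate is a function    *)
(* w : 'I_n -> 'I_b.+1 (b is a global bound on the entries, which must     *)
(* exceed every entry of every multi-degree considered).  The component    *)
(* in multi-degree V is the tensor product over Q of one copy of Q[t] for  *)
(* each coordinate 0 <> w <= V (and of Q at w = 0), i.e. the polynomial    *)
(* ring Q[t_w : 0 <> w <= V].  We realise all components inside the single *)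
(* polynomial ring Q[t_w : w coordinate] (variable t_w = 'X_(enum_rank w)) *)
(* and cut out the component of multi-degree V by a support condition.     *)

Definition mdeg (n : nat) := {ffun 'I_n -> nat}.
Definition crd (n b : nat) := {ffun 'I_n -> 'I_b.+1}.
Definition NV (n b : nat) := #|{: crd n b}|.
Definition Pol (n b : nat) := {mpoly rat[NV n b]}.

Definition tv (n b : nat) (w : crd n b) : Pol n b := 'X_(enum_rank w).

Definition crd_nz (n b : nat) (w : crd n b) : bool := [exists i, (w i : nat) != 0%N].
Definition crd_le (n b : nat) (w : crd n b) (V : mdeg n) : bool :=
  [forall i, (w i <= V i)%N].

Definition inC (n b : nat) (V : mdeg n) (p : Pol n b) : Prop :=
  forall m, m \in msupp p -> forall w : crd n b,
    (m (enum_rank w) != 0)%N -> crd_nz w && crd_le w V.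

(* Effect of the face d_{i,j} (source multi-degree V, 0 <= j <= V_i) on   *)
(* coordinates: for j < V_i slices j and j+1 are merged, for j = V_i the  *)
(* slice V_i is multiplied into slice 0.                                  *)
Definition face_crd (n b : nat) (V : mdeg n) (i : 'I_n) (j : nat) (w : crd n b)
  : crd n b :=
  [ffun k => if k == i then
               inord (if (j < V i)%N then (if (w k <= j)%N then (w k : nat) else (w k).-1)
                      else (if (w k : nat) == V i then 0%N else (w k : nat)))
             else w k].

(* d_{i,j} : the algebra map t_w |-> t_{face w}, where t_0 means 0 (the   *)
(* entry at the base point lies in Q, and t acts on Q by 0).               *)
Definition dface (n b : nat) (V : mdeg n) (i : 'I_n) (j : nat) (p : Pol n b)
  : Pol n b :=
  mmap (@mpolyC (NV n b) rat)
    (fun k : 'I_(NV n b) =>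
       let u := face_crd V i j (enum_val k) in if crd_nz u then tv u else 0) p.

Definition dir_d (n b : nat) (V : mdeg n) (i : 'I_n) (p : Pol n b) : Pol n b :=
  \sum_(j < (V i).+1) (-1) ^+ j * dface V i j p.

Definition addE (n : nat) (U : mdeg n) (i : 'I_n) : mdeg n :=
  [ffun k => if k == i then (U k).+1 else U k].

Definition tdeg (n : nat) (V : mdeg n) : nat := (\sum_(i < n) V i)%N.

(* A chain of the total complex: a family of elements indexed by          *)
(* multi-degrees (only those of the relevant total degree matter).       *)
Definition dtot (n b : nat) (z : mdeg n -> Pol n b) (U : mdeg n) : Pol n b :=
  \sum_(i < n) (-1) ^+ (\sum_(l < n | (l < i)%N) U l)%N * dir_d (addE U i) i (z (addE U i)).

Definition one_md (n : nat) : mdeg n := [ffun => 1%N].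

(* Entries of multi-degrees of total degree <= n+1 are <= n+1, so the    *)
(* bound b = n.+1 (entries in 'I_(n+2)) is enough.                        *)
Definition homol (n : nat) (p q : Pol n n.+1) : Prop :=
  exists z : mdeg n -> Pol n n.+1,
    (forall V, tdeg V = n.+1 -> inC V (z V)) /\
    (forall U, tdeg U = n -> dtot z U = (if U == one_md n then p - q else 0)).

Definition bv (n : nat) := {ffun 'I_n -> bool}.
Definition bcrd (n b : nat) (v : bv n) : crd n b := [ffun i => inord (nat_of_bool (v i))].
Definition bv_nz (n : nat) (v : bv n) : bool := [exists i, v i].

(* x_v : the multi-matrix with x at v (its image x(0) in Q if v = 0)      *)
(* and 1 elsewhere.                                                        *)
Definition xat (n : nat) (x : {poly rat}) (v : bv n) : Pol n n.+1 :=
  if bv_nz v then (map_poly (@mpolyC (NV n n.+1) rat) x).[tv (bcrd n.+1 v)]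
  else (x.[0]) %:MP_[NV n n.+1].

Definition bv_one (n : nat) : bv n := [ffun => true].
Definition bv_e (n : nat) (i : 'I_n) : bv n := [ffun j => j == i].

From HB Require Import structures.
From Pilot Require Import Defs.
From mathcomp Require Import all_boot all_algebra.
From mathcomp Require Import mpoly.
From mathcomp Require Import ring.
From mathcomp Require Import fingroup perm.
Set Implicit Arguments. Unset Strict Implicit. Unset Printing Implicit Defensive.
Import GRing.Theory.
Local Open Scope ring_scope.

(* Let [pclear i] be the algebra endomorphism of multi-degree [1_n] that sets the
   [i]-th entry of every coordinate to 0 (killing [t_w] when [w] becomes 0), and
   [pshift i] the one moving slice 1 of direction [i] to slice 2, which lands in
   multi-degree [1_n + e_i].  For [p], [q] of multi-degree [1_n], the faces
   [d_{i,0}], [d_{i,1}], [d_{i,2}] of [p * pshift i q] are [pclear i p * q],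
   [p * q] and [p * pclear i q], while every other direction of [1_n + e_i] is
   degenerate.  Hence [p * q ~ pclear i p * q + p * pclear i q], and [p ~ 0]
   whenever [pclear i p = p].
   Placing [k] factors [x_l] at coordinates [v_l] gives a [k x n] boolean matrix.
   If some column has no 1, the product is [pclear]-invariant, hence [~ 0]; if a
   column has two 1s, the product splits into two whose matrices have fewer 1s.
   By induction the product is homologous to the sum over the submatrices with
   exactly one 1 in each column: this is (2) for [k = 2] and (3) for [x_l = t];
   for [k = n] these submatrices are the permutation matrices, for [k > n] there
   are none. *)

Section MmapVariables.
Variables (k : nat) (R S : comRingType).
Implicit Types (p : {mpoly R[k]}) (g : 'I_k -> S).

Lemma eq_in_mmap (f : R -> S) g1 g2 p :
    (forall m j, m \in msupp p -> m j != 0%N -> g1 j = g2 j) ->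
  mmap f g1 p = mmap f g2 p.
Proof.
move=> eq_g; rewrite /mmap !big_seq; apply: eq_bigr => m m_p; congr (_ * _).
apply: eq_bigr => j _; have [-> | /(eq_g _ _ m_p) -> //] := eqVneq (m j) 0%N.
by rewrite !expr0.
Qed.

Lemma rpred_mmap (A : subringClosed S) (f : R -> S) g p :
    (forall c, f c \in A) -> (forall m j, m \in msupp p -> m j != 0%N -> g j \in A) ->
  mmap f g p \in A.
Proof.
move=> fA gA; rewrite /mmap big_seq; apply: rpred_sum => m m_p.
apply: rpredM => //; apply: rpred_prod => j _.
have [-> | /(gA _ _ m_p) g_j] := eqVneq (m j) 0%N; first by rewrite expr0 rpred1.
exact: rpredX.
Qed.

Lemma mmapXU (f : {rmorphism R -> S}) g j : mmap f g 'X_j = g j.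
Proof. by rewrite mmapX mmap1U. Qed.

End MmapVariables.

Section MmapPolyC.
Variables (k : nat) (R : comRingType).
Local Notation MC := (@mpolyC k R).

Lemma mmap_polyC_id (p : {mpoly R[k]}) : mmap MC (fun j => 'X_j) p = p.
Proof.
rewrite /mmap; under eq_bigr do rewrite mmap1_id mul_mpolyC.
by rewrite -mpolyE.
Qed.

Lemma mmap_polyC_comp (g h : 'I_k -> {mpoly R[k]}) p :
  mmap MC g (mmap MC h p) = mmap MC (fun j => mmap MC g (h j)) p.
Proof.
rewrite [mmap MC h p]/mmap rmorph_sum /mmap; apply: eq_bigr => m _.
rewrite rmorphM /= mmapC; congr (_ * _).
by rewrite /mmap1 rmorph_prod; apply: eq_bigr => j _; rewrite rmorphXn.
Qed.

End MmapPolyC.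

Lemma sum_nat_of_bool_eq1P (I : finType) (b : pred I) :
  reflect (exists i, forall l, b l = (l == i)) (\sum_(l : I) nat_of_bool (b l) == 1)%N.
Proof.
have -> : (\sum_(l : I) nat_of_bool (b l))%N = #|b|.
  by rewrite -sum1_card [RHS]big_mkcond.
by apply: (iffP card1P) => -[i b_i]; exists i => l; have := b_i l; rewrite !inE.
Qed.

Section Components.
Variable n : nat.
Local Notation N := (NV n n.+1).
Local Notation P := (Pol n n.+1).
Local Notation C := (crd n n.+1).
Local Notation MC := (@mpolyC N rat).
Implicit Types (V W : Defs.mdeg n) (u : C) (p : P).

Definition allowed V u := crd_nz u && crd_le u V.

Definition component V : {pred P} :=
  [pred p : P | all (fun m : 'X_{1..N} =>
                       [forall u, (m (enum_rank u) != 0%N) ==> allowed V u]) (msupp p)].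

Lemma componentP V p : reflect (inC V p) (p \in component V).
Proof.
apply: (iffP allP) => [p_V m m_p u | p_V m m_p]; last first.
  by apply/forallP => u; apply/implyP; exact: p_V.
exact/implyP/(forallP (p_V m m_p)).
Qed.

Lemma component_subring_closed V : subring_closed (component V).
Proof.
split=> [|p q /componentP p_V /componentP q_V|p q /componentP p_V /componentP q_V].
- by apply/componentP => m; rewrite msupp1 inE => /eqP -> u; rewrite mnm0E.
- apply/componentP => m /msuppB_le; rewrite mem_cat => /orP[]; [exact: p_V|exact: q_V].
- apply/componentP => m /msuppM_le /allpairsP [[m1 m2] /= [m1_p m2_q ->]] u.
  by rewrite mnmDE addn_eq0 negb_and => /orP[]; [exact: p_V|exact: q_V].
Qed.

HB.instance Definition _ V :=
  GRing.isSubringClosed.Build P (component V) (component_subring_closed V).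

Lemma componentC V c : c%:MP \in component V.
Proof.
apply/componentP => m; rewrite msuppC; case: (c == 0) => //.
by rewrite inE => /eqP -> u; rewrite mnm0E.
Qed.

Lemma component_tv V u : allowed V u -> tv u \in component V.
Proof.
move=> u_V; apply/componentP => m; rewrite msuppX inE => /eqP -> w.
by rewrite mnm1E; case: (enum_rank u =P enum_rank w) => // /enum_rank_inj <-.
Qed.

Lemma allowed_mono V W : (forall k, V k <= W k)%N -> {subset allowed V <= allowed W}.
Proof.
move=> le_VW u /andP[u_nz /forallP u_V]; apply/andP; split => //.
by apply/forallP => k; exact: leq_trans (u_V k) (le_VW k).
Qed.

Lemma component_mono V W : (forall k, V k <= W k)%N -> {subset component V <= component W}.
Proof.
move=> le_VW p /componentP p_V; apply/componentP => m m_p u m_u.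
exact: allowed_mono le_VW _ (p_V m m_p u m_u).
Qed.

Lemma mmap_eq_component V p (g1 g2 : 'I_N -> P) :
    p \in component V -> (forall u, allowed V u -> g1 (enum_rank u) = g2 (enum_rank u)) ->
  mmap MC g1 p = mmap MC g2 p.
Proof.
move=> /componentP p_V eq_g; apply: eq_in_mmap => m j m_p m_j.
by rewrite -(enum_valK j) eq_g //; apply: (p_V m m_p); rewrite enum_valK.
Qed.

Lemma mmap_component V W p (g : 'I_N -> P) :
    p \in component V -> (forall u, allowed V u -> g (enum_rank u) \in component W) ->
  mmap MC g p \in component W.
Proof.
move=> /componentP p_V g_W; apply: rpred_mmap => [c|m j m_p m_j]; first exact: componentC.
by rewrite -(enum_valK j) g_W //; apply: (p_V m m_p); rewrite enum_valK.
Qed.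

End Components.

Definition face_nat (m j a : nat) : nat :=
  if (j < m)%N then (if (a <= j)%N then a else a.-1) else (if a == m then 0%N else a).

Lemma face_nat_one j a : (j <= 1)%N -> (a <= 1)%N -> face_nat 1 j a = 0%N.
Proof. by case: j => [|[|]] //; case: a => [|[|]]. Qed.

Lemma face_nat_two j a : (j <= 2)%N -> (a <= 1)%N ->
  face_nat 2 j a = if j == 0%N then 0%N else a.
Proof. by case: j => [|[|[|]]] //; case: a => [|[|]]. Qed.

Lemma face_nat_two_double j a : (j <= 2)%N -> (a <= 1)%N ->
  face_nat 2 j a.*2 = if j == 2%N then 0%N else a.
Proof. by case: j => [|[|[|]]] //; case: a => [|[|]]. Qed.

Lemma double_le_two a : (a <= 1)%N -> (a.*2 <= 2)%N.
Proof. by rewrite -[2%N]/(1.*2)%N leq_double. Qed.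

Section Faces.
Variable n : nat.
Hypothesis n_gt0 : (0 < n)%N.
Local Notation N := (NV n n.+1).
Local Notation P := (Pol n n.+1).
Local Notation C := (crd n n.+1).
Local Notation MC := (@mpolyC N rat).
Implicit Types (V : Defs.mdeg n) (u : C) (p q : P).

Definition crd_set (i : 'I_n) (a : nat) u : C :=
  [ffun k => if k == i then inord a else u k].

Lemma crd_setE i a u k : (a <= n.+1)%N ->
  (crd_set i a u k : nat) = if k == i then a else u k.
Proof. by move=> a_le; rewrite ffunE; case: eqP => // _; rewrite inordK. Qed.

Lemma crd_setK i u : crd_set i (u i) u = u.
Proof. by apply/ffunP => k; rewrite ffunE; case: eqP => // ->; rewrite inord_val. Qed.

Lemma crd_set_set i a b u : crd_set i a (crd_set i b u) = crd_set i a u.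
Proof. by apply/ffunP => k; rewrite !ffunE; case: eqP. Qed.

Lemma face_crdE V i j u : face_crd V i j u = crd_set i (face_nat (V i) j (u i)) u.
Proof. by apply/ffunP => k; rewrite !ffunE; case: eqP => // ->. Qed.

Lemma crd_le_oneP u : reflect (forall k, u k <= 1)%N (crd_le u (one_md n)).
Proof. by apply: (iffP forallP) => le1 k; have := le1 k; rewrite ffunE. Qed.

Definition one_plus_e (i : 'I_n) : Defs.mdeg n := addE (one_md n) i.

Lemma one_plus_eE i k : one_plus_e i k = if k == i then 2%N else 1%N.
Proof. by rewrite !ffunE. Qed.

Definition crd_clear i u := crd_set i 0 u.
Definition crd_shift i u := crd_set i (u i).*2 u.

Lemma face_one_plus_e i j u : (j <= 2)%N -> crd_le u (one_md n) ->
  face_crd (one_plus_e i) i j u = if j == 0%N then crd_clear i u else u.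
Proof.
move=> j_le2 /crd_le_oneP u_le1.
rewrite face_crdE one_plus_eE eqxx face_nat_two //.
by case: eqP => // _; rewrite crd_setK.
Qed.

Lemma face_one_plus_e_shift i j u : (j <= 2)%N -> crd_le u (one_md n) ->
  face_crd (one_plus_e i) i j (crd_shift i u) = if j == 2%N then crd_clear i u else u.
Proof.
move=> j_le2 /crd_le_oneP u_le1; have shift_le : ((u i).*2 <= n.+1)%N.
  exact: leq_trans (double_le_two (u_le1 i)) (n_gt0 : 2 <= n.+1)%N.
rewrite face_crdE crd_set_set one_plus_eE eqxx crd_setE // eqxx face_nat_two_double //.
by case: eqP => // _; rewrite crd_setK.
Qed.

Lemma face_degenerate V j u : V j = 1%N -> crd_le u V ->
  face_crd V j 0 u = face_crd V j 1 u.
Proof.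
move=> Vj /forallP u_V; have u_le1 : (u j <= 1)%N by rewrite -Vj.
by rewrite !face_crdE Vj !face_nat_one.
Qed.

Lemma allowed_shift i u : allowed (one_md n) u -> allowed (one_plus_e i) (crd_shift i u).
Proof.
move=> /andP[/existsP[k0 u_k0] /crd_le_oneP u_le1].
have shift_le : ((u i).*2 <= n.+1)%N.
  exact: leq_trans (double_le_two (u_le1 i)) (n_gt0 : 2 <= n.+1)%N.
apply/andP; split.
  apply/existsP; exists k0; rewrite crd_setE //.
  by case: (k0 =P i) => // <-; rewrite double_eq0.
apply/forallP => k; rewrite crd_setE // one_plus_eE; case: eqP => _.
  exact: double_le_two.
exact: u_le1.
Qed.

Definition tv0 u : P := if crd_nz u then tv u else 0.

Lemma tv0_allowed V u : allowed V u -> tv0 u = 'X_(enum_rank u).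
Proof. by case/andP => u_nz _; rewrite /tv0 u_nz. Qed.

Lemma dfaceE V i j p :
  dface V i j p = mmap MC (fun k => tv0 (face_crd V i j (enum_val k))) p.
Proof. by []. Qed.

Definition pclear i p := mmap MC (fun k => tv0 (crd_clear i (enum_val k))) p.
Definition pshift i p := mmap MC (fun k => tv (crd_shift i (enum_val k))) p.

Lemma pclear_prod i (I : Type) (r : seq I) (Q : pred I) (F : I -> P) :
  pclear i (\prod_(l <- r | Q l) F l) = \prod_(l <- r | Q l) pclear i (F l).
Proof. exact: rmorph_prod. Qed.

Lemma pclearM i p q : pclear i (p * q) = pclear i p * pclear i q.
Proof. exact: rmorphM. Qed.

Lemma pclear1 i : pclear i 1 = 1.
Proof. exact: rmorph1. Qed.

Lemma dface_one_plus_e i j p : (j <= 2)%N -> p \in component (one_md n) ->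
  dface (one_plus_e i) i j p = if j == 0%N then pclear i p else p.
Proof.
move=> j_le2 p_1; rewrite dfaceE; case: eqP => [j0 | /eqP j_neq0].
  apply: (mmap_eq_component p_1) => u /andP[_ u_1].
  by rewrite enum_rankK face_one_plus_e // j0.
rewrite -[RHS]mmap_polyC_id; apply: (mmap_eq_component p_1) => u u_1.
by rewrite enum_rankK face_one_plus_e ?(negbTE j_neq0) ?(tv0_allowed u_1) //; case/andP: u_1.
Qed.

Lemma dface_one_plus_e_shift i j p : (j <= 2)%N -> p \in component (one_md n) ->
  dface (one_plus_e i) i j (pshift i p) = if j == 2%N then pclear i p else p.
Proof.
move=> j_le2 p_1; rewrite dfaceE /pshift mmap_polyC_comp; case: eqP => [j2 | /eqP j_neq2].
  apply: (mmap_eq_component p_1) => u /andP[_ u_1].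
  by rewrite enum_rankK /tv mmapXU enum_rankK face_one_plus_e_shift // j2.
rewrite -[RHS]mmap_polyC_id; apply: (mmap_eq_component p_1) => u u_1.
rewrite enum_rankK /tv mmapXU enum_rankK face_one_plus_e_shift ?(negbTE j_neq2) //.
  exact: tv0_allowed u_1.
by case/andP: u_1.
Qed.

Lemma pshift_component i p :
  p \in component (one_md n) -> pshift i p \in component (one_plus_e i).
Proof.
move=> p_1; apply: (mmap_component p_1) => u u_1.
by rewrite enum_rankK; apply/component_tv/allowed_shift.
Qed.

Lemma component_one_plus_e i :
  {subset component (one_md n) <= component (one_plus_e i)}.
Proof. by apply: component_mono => k; rewrite one_plus_eE ffunE; case: eqP. Qed.

End Faces.

Section Boundaries.
Variable n : nat.
Hypothesis n_gt0 : (0 < n)%N.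
Local Notation P := (Pol n n.+1).
Implicit Types (V U : Defs.mdeg n) (p q r : P).

Lemma dfaceM V i j p q : dface V i j (p * q) = dface V i j p * dface V i j q.
Proof. by rewrite !dfaceE rmorphM. Qed.

Lemma dir_dB V j p q : dir_d V j (p - q) = dir_d V j p - dir_d V j q.
Proof.
by rewrite /dir_d -sumrB; apply: eq_bigr => k _; rewrite !dfaceE raddfB mulrBr.
Qed.

Lemma dir_d0 V j : dir_d V j (0 : P) = 0.
Proof. by rewrite -[X in dir_d _ _ X](subrr 0) dir_dB subrr. Qed.

Lemma dir_d_degenerate V j p : V j = 1%N -> p \in component V -> dir_d V j p = 0.
Proof.
move=> Vj p_V; rewrite /dir_d Vj !big_ord_recr big_ord0 /= expr0 expr1 mul1r mulN1r add0r.
rewrite !dfaceE (mmap_eq_component (g2 := fun k => tv0 (face_crd V j 1 (enum_val k))) p_V).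
  exact: subrr.
by move=> u /andP[_ u_V]; rewrite enum_rankK face_degenerate.
Qed.

Lemma dir_d_one_plus_e i p :
  dir_d (one_plus_e i) i p =
    dface (one_plus_e i) i 0 p - dface (one_plus_e i) i 1 p + dface (one_plus_e i) i 2 p.
Proof.
rewrite /dir_d one_plus_eE eqxx !big_ord_recr big_ord0 /=.
by rewrite expr0 expr1 sqrrN expr1n !mul1r mulN1r add0r.
Qed.

Definition boundary r : Prop :=
  exists z : Defs.mdeg n -> P,
    (forall V, tdeg V = n.+1 -> inC V (z V)) /\
    (forall U, tdeg U = n -> dtot z U = if U == one_md n then r else 0).

Lemma homolE p q : homol p q = boundary (p - q).
Proof. by []. Qed.

Lemma dtotB (z1 z2 : Defs.mdeg n -> P) U :
  dtot (fun V => z1 V - z2 V) U = dtot z1 U - dtot z2 U.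
Proof. by rewrite /dtot -sumrB; apply: eq_bigr => j _; rewrite dir_dB mulrBr. Qed.

Lemma boundary0 : boundary 0.
Proof.
exists (fun _ => 0); split => [V _ | U _]; first exact/componentP/rpred0.
by rewrite /dtot big1 ?if_same // => j _; rewrite dir_d0 mulr0.
Qed.

Lemma boundaryB r1 r2 : boundary r1 -> boundary r2 -> boundary (r1 - r2).
Proof.
move=> [z1 [z1_V dz1]] [z2 [z2_V dz2]]; exists (fun V => z1 V - z2 V); split.
  by move=> V dV; apply/componentP/rpredB; apply/componentP; [exact: z1_V | exact: z2_V].
by move=> U dU; rewrite dtotB dz1 // dz2 //; case: eqP; rewrite ?subr0.
Qed.

Lemma boundaryN r : boundary r -> boundary (- r).
Proof. by move=> r_bd; rewrite -sub0r; apply: boundaryB => //; exact: boundary0. Qed.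

Lemma boundaryD r1 r2 : boundary r1 -> boundary r2 -> boundary (r1 + r2).
Proof. by move=> r1_bd /boundaryN r2_bd; rewrite -[r2]opprK; apply: boundaryB. Qed.

Lemma boundary_signr k r : boundary ((-1) ^+ k * r) -> boundary r.
Proof.
rewrite -signr_odd; case: (odd k); rewrite ?expr0 ?expr1 ?mul1r ?mulN1r //.
by move=> /boundaryN; rewrite opprK.
Qed.

Lemma addE_inj U U' i : addE U i = addE U' i -> U = U'.
Proof.
move=> eq_UU'; apply/ffunP => k; have := congr1 (fun f : Defs.mdeg n => f k) eq_UU'.
by rewrite !ffunE; case: (k == i) => // -[].
Qed.

Lemma boundary_dir_d i z :
  z \in component (one_plus_e i) -> boundary (dir_d (one_plus_e i) i z).
Proof.
move=> z_V; apply: (@boundary_signr (\sum_(l < n | (l < i)%N) one_md n l)).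
exists (fun V => if V == one_plus_e i then z else 0); split.
  by move=> V _; apply/componentP; case: eqP => [-> //|_]; exact: rpred0.
move=> U _; rewrite /dtot (bigD1 i) //= [X in _ + X]big1 ?addr0; last first.
  move=> j j_neq_i; case: (addE U j =P one_plus_e i) => [eq_U|_]; last by rewrite dir_d0 mulr0.
  by rewrite eq_U dir_d_degenerate ?mulr0 // one_plus_eE (negbTE j_neq_i).
case: (U =P one_md n) => [-> | U_neq]; first by rewrite /one_plus_e !eqxx.
case: (addE U i =P one_plus_e i) => [/addE_inj // | _].
by rewrite dir_d0 mulr0.
Qed.

Lemma boundary_pclear_mul i p q : p \in component (one_md n) -> q \in component (one_md n) ->
  boundary (pclear i p * q - p * q + p * pclear i q).
Proof.
move=> p_1 q_1; have pq_V : p * pshift i q \in component (one_plus_e i).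
  by rewrite rpredM // ?(pshift_component n_gt0) // (component_one_plus_e i p_1).
have := boundary_dir_d pq_V; rewrite dir_d_one_plus_e !dfaceM.
by rewrite !(dface_one_plus_e i _ p_1) ?(dface_one_plus_e_shift n_gt0 i _ q_1).
Qed.

Lemma boundary_pclear i p : p \in component (one_md n) -> boundary (pclear i p).
Proof.
move=> p_1; have := boundary_pclear_mul i p_1 (rpred1 _).
by rewrite pclear1 !mulr1 subrK.
Qed.

End Boundaries.

Section XAt.
Variable n : nat.
Local Notation N := (NV n n.+1).
Local Notation MC := (@mpolyC N rat).
Implicit Types (v : bv n) (x y : {poly rat}).

Definition bv_clear (i : 'I_n) v : bv n := [ffun k => (k != i) && v k].

Lemma bv_clear_id i v : v i = false -> bv_clear i v = v.
Proof. by move=> v_i; apply/ffunP => k; rewrite ffunE; case: eqP => [->|]. Qed.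

Lemma bcrdE v k : (bcrd n.+1 v k : nat) = v k.
Proof. by rewrite ffunE inordK //; case: (v k). Qed.

Lemma crd_nz_bcrd v : crd_nz (bcrd n.+1 v) = bv_nz v.
Proof. by apply: eq_existsb => k; rewrite bcrdE; case: (v k). Qed.

Lemma allowed_bcrd v : bv_nz v -> allowed (one_md n) (bcrd n.+1 v).
Proof.
move=> v_nz; rewrite /allowed crd_nz_bcrd v_nz; apply/forallP => k.
by rewrite bcrdE ffunE; case: (v k).
Qed.

Lemma xat_component x v : xat x v \in component (one_md n).
Proof.
rewrite /xat; case: ifP => [v_nz|_]; last exact: componentC.
rewrite horner_coef; apply: rpred_sum => j _; rewrite coef_map /=.
by rewrite rpredM ?componentC // rpredX // component_tv // allowed_bcrd.
Qed.

Lemma crd_clear_bcrd i v : crd_clear i (bcrd n.+1 v) = bcrd n.+1 (bv_clear i v).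
Proof.
apply/ffunP => k; apply: ord_inj; rewrite /crd_clear crd_setE // !bcrdE ffunE.
by case: eqP.
Qed.

Lemma pclear_xat i x v : pclear i (xat x v) = xat x (bv_clear i v).
Proof.
rewrite /xat; case: ifP => v_nz; last first.
  have -> : bv_nz (bv_clear i v) = false.
    apply: contraFF v_nz => /existsP[k]; rewrite ffunE => /andP[_ v_k].
    by apply/existsP; exists k.
  by rewrite /pclear mmapC.
rewrite /pclear -horner_map /= -map_poly_comp.
rewrite (@eq_map_poly _ _ _ MC); last by move=> c /=; rewrite mmapC.
rewrite /tv mmapXU enum_rankK crd_clear_bcrd /tv0 crd_nz_bcrd.
by case: ifP => // _; rewrite -mpolyC0 horner_map.
Qed.

Lemma xatM x y v : xat (x * y) v = xat x v * xat y v.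
Proof. by rewrite /xat; case: ifP => _; rewrite ?rmorphM /= ?hornerM ?rmorphM. Qed.

Lemma xat1 v : xat 1 v = 1.
Proof. by rewrite /xat; case: ifP => _; rewrite ?rmorph1 ?hornerC ?rmorph1. Qed.

Lemma xatXn x k v : xat (x ^+ k) v = xat x v ^+ k.
Proof. by elim: k => [|k IH]; rewrite ?expr0 ?xat1 // !exprS xatM IH. Qed.

Lemma xatX_eq0 v : ~~ bv_nz v -> xat 'X v = 0.
Proof. by rewrite /xat => /negbTE ->; rewrite hornerX. Qed.

End XAt.

Section BoolMatrices.
Variables n k : nat.
Local Notation BM := {ffun 'I_k -> bv n}.
Implicit Types (V W : BM) (A : pred 'I_k) (i : 'I_n) (l : 'I_k).

Definition below W V := [forall l, forall i, W l i ==> V l i].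
Definition sums_to_one W := [forall i, \sum_(l < k) nat_of_bool (W l i) == 1]%N.
Definition weight V := #|[set p : 'I_k * 'I_n | V p.1 p.2]|.
Definition clear_col V A i : BM := [ffun l => if A l then bv_clear i (V l) else V l].

Lemma belowP W V : reflect (forall l i, W l i -> V l i) (below W V).
Proof.
apply: (iffP forallP) => [W_V l i | W_V l]; first exact/implyP/(forallP (W_V l) i).
by apply/forallP => i; apply/implyP; exact: W_V.
Qed.

Lemma sums_to_oneP W i : sums_to_one W -> exists l0, forall l, W l i = (l == l0).
Proof. by move=> /forallP/(_ i)/sum_nat_of_bool_eq1P. Qed.

Lemma clear_colE V A i l j : clear_col V A i l j = ~~ (A l && (j == i)) && V l j.
Proof. by rewrite !ffunE; case: (A l) => //; rewrite ffunE. Qed.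

Lemma below_clear_col W V A i :
  below W (clear_col V A i) = below W V && [forall l, A l ==> ~~ W l i].
Proof.
apply/belowP/andP => [W_V | [/belowP W_V /forallP W_A] l j W_lj].
  split; first by apply/belowP => l j /W_V; rewrite clear_colE => /andP[].
  apply/forallP => l; apply/implyP => A_l; apply/negP => /W_V.
  by rewrite clear_colE A_l eqxx.
rewrite clear_colE W_V // andbT; apply/negP => /andP[A_l /eqP j_i].
by move: (implyP (W_A l) A_l); rewrite -j_i W_lj.
Qed.

Lemma clear_col_id V A i : (forall l, ~~ V l i) -> clear_col V A i = V.
Proof.
move=> col_i; apply/ffunP => l; apply/ffunP => j; rewrite clear_colE.
by case: (j =P i) => [-> | _]; rewrite ?andbF // (negbTE (col_i l)) andbF.
Qed.

Lemma below_sums_to_one_eq W V : below W V -> sums_to_one W -> sums_to_one V -> W = V.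
Proof.
move=> /belowP W_V W_one V_one; apply/ffunP => l; apply/ffunP => i.
apply/idP/idP => [/W_V // | V_li].
have [l0 W_i] := sums_to_oneP i W_one; have [l1 V_i] := sums_to_oneP i V_one.
have W_l0 : W l0 i by rewrite W_i.
by move: (W_V _ _ W_l0) V_li; rewrite !V_i W_i => /eqP -> /eqP ->.
Qed.

Lemma weight_clear_col V A i l : V l i -> A l -> (weight (clear_col V A i) < weight V)%N.
Proof.
move=> V_li A_l; apply: proper_card; apply/properP; split.
  by apply/subsetP => -[l' j]; rewrite !inE /= clear_colE => /andP[].
by exists (l, i); rewrite !inE //= clear_colE A_l eqxx.
Qed.

Lemma nz_rows_injection W : [forall l, bv_nz (W l)] -> sums_to_one W ->
  exists f : 'I_k -> 'I_n, injective f /\ forall l, W l (f l).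
Proof.
move=> /forallP W_nz W_one.
have /all_sig[f W_f] : forall l, {i | W l i} by move=> l; apply/sigW/existsP/W_nz.
exists f; split => // l1 l2 eq_f; have [l0 W_i] := sums_to_oneP (f l1) W_one.
by move: (W_f l1) (W_f l2); rewrite -eq_f !W_i => /eqP -> /eqP ->.
Qed.

End BoolMatrices.

Section XProducts.
Variables (n : nat) (k : nat) (X : 'I_k -> {poly rat}).
Hypothesis n_gt0 : (0 < n)%N.
Local Notation BM := {ffun 'I_k -> bv n}.
Implicit Types (V W : BM) (A : pred 'I_k) (i : 'I_n).

Definition xprod V : Pol n n.+1 := \prod_(l < k) xat (X l) (V l).
Definition xsum V := \sum_(W | below W V && sums_to_one W) xprod W.

Lemma xsum_clear_col V A i :
  xsum V = xsum (clear_col V A i) + xsum (clear_col V (predC A) i).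
Proof.
rewrite /xsum (bigID (fun W => [forall l, A l ==> ~~ W l i])) /=.
congr (_ + _); apply: eq_bigl => W; rewrite below_clear_col.
  by rewrite andbAC.
rewrite -andbA -[RHS]andbA; congr (_ && _); rewrite andbC.
case W_one: (sums_to_one W); rewrite ?andbT ?andbF //; have [l0 W_i] := sums_to_oneP i W_one.
have col_i B : [forall l, B l ==> ~~ W l i] = ~~ B l0.
  apply/forallP/idP => [/(_ l0) | B_l0 l]; first by rewrite W_i eqxx implybF.
  by rewrite W_i; apply/implyP => B_l; apply: contraNneq B_l0 => <-.
by rewrite !col_i /= negbK.
Qed.

Lemma boundary_xprod_clear_col V A i :
  boundary (xprod (clear_col V A i) - xprod V + xprod (clear_col V (predC A) i)).
Proof.
pose p := \prod_(l < k | A l) xat (X l) (V l).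
pose q := \prod_(l < k | ~~ A l) xat (X l) (V l).
have xprod_clear B : xprod (clear_col V B i) =
    \prod_(l < k | B l) xat (X l) (bv_clear i (V l)) * \prod_(l < k | ~~ B l) xat (X l) (V l).
  rewrite /xprod (bigID B) /=; congr (_ * _); apply: eq_bigr => l B_l; rewrite ffunE.
    by rewrite B_l.
  by rewrite (negbTE B_l).
have -> : xprod (clear_col V A i) = pclear i p * q.
  by rewrite xprod_clear pclear_prod; under eq_bigr do rewrite pclear_xat.
have -> : xprod (clear_col V (predC A) i) = p * pclear i q.
  rewrite xprod_clear pclear_prod mulrC; congr (_ * _).
    by apply: eq_bigl => l; rewrite /= negbK.
  by apply: eq_bigr => l _; rewrite pclear_xat.
rewrite /xprod (bigID A) -/p -/q /=.
by apply: boundary_pclear_mul => //; apply: rpred_prod => l _; apply: xat_component.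
Qed.

Lemma xsum_sums_to_one V : sums_to_one V -> xsum V = xprod V.
Proof.
move=> V_one; rewrite /xsum (eq_bigl (pred1 V)) ?big_pred1_eq // => W /=.
apply/andP/eqP => [[W_V W_one] | ->]; first exact: below_sums_to_one_eq.
by split => //; apply/belowP.
Qed.

Theorem boundary_xprod_sub_xsum V : boundary (xprod V - xsum V).
Proof.
have [m] := ubnP (weight V); elim: m V => // m IH V /ltnSE weight_V.
have [V_one | /forallPn[i col_i]] := boolP (sums_to_one V).
  by rewrite xsum_sums_to_one // subrr; exact: boundary0.
have [/existsP[l1 V_l1] | /existsPn col_empty] := boolP [exists l, V l i]; last first.
  have clear_V A : clear_col V A i = V by exact: clear_col_id.
  have -> : xsum V = 0.
    apply/esym/(addrI (xsum V)); rewrite addr0 {1}(xsum_clear_col V predT i).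
    by rewrite !clear_V.
  have := boundary_xprod_clear_col V predT i.
  by rewrite !clear_V subrr add0r subr0.
have [l2 l2_l1 V_l2] : exists2 l2, l2 != l1 & V l2 i.
  apply/exists_inP; apply: contraR col_i => /exists_inPn no_l2.
  apply/sum_nat_of_bool_eq1P; exists l1 => l; apply/idP/eqP => [V_l | -> //].
  by apply: contraTeq V_l => /no_l2.
pose A := pred1 l1.
have IH_clear (B : pred 'I_k) l : V l i -> B l ->
    boundary (xprod (clear_col V B i) - xsum (clear_col V B i)).
  by move=> V_l B_l; apply: IH; exact: leq_trans (weight_clear_col V_l B_l) weight_V.
have := boundaryB (boundaryD (IH_clear A l1 V_l1 (eqxx _)) (IH_clear (predC A) l2 V_l2 l2_l1))
  (boundary_xprod_clear_col V A i).
by rewrite (xsum_clear_col V A i); congr boundary; ring.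
Qed.

End XProducts.

Section Proposition.
Variable n : nat.
Hypothesis n_gt0 : (0 < n)%N.
Implicit Types (v w : bv n) (x y : {poly rat}).

Lemma homol_xat_mul_clear v w x y i :
  v i = false -> w i = false -> homol (xat x v * xat y w) 0.
Proof.
move=> v_i w_i; rewrite homolE subr0 -(bv_clear_id v_i) -(bv_clear_id w_i).
rewrite -!pclear_xat -pclearM; apply: boundary_pclear => //.
by rewrite rpredM ?xat_component.
Qed.

Lemma homol_xat_neq_one v x : v != bv_one n -> homol (xat x v) 0.
Proof.
move=> v_neq1; have /existsP[i /negbTE v_i] : [exists i, ~~ v i].
  apply: contraNT v_neq1 => /existsPn v1.
  by apply/eqP/ffunP => i; rewrite ffunE; apply/negbNE/v1.
by rewrite -[xat x v]mulr1 -(xat1 v); apply: (homol_xat_mul_clear _ _ v_i v_i).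
Qed.

Definition bm2 v w : {ffun 'I_2 -> bv n} := [ffun l => if l == ord0 then v else w].

Lemma bm2_bij : bijective (fun p : bv n * bv n => bm2 p.1 p.2).
Proof.
exists (fun W : {ffun 'I_2 -> bv n} => (W ord0, W ord_max)) => [[v w] | W].
  by rewrite !ffunE.
by apply/ffunP => l; rewrite ffunE; case: l => [[|[|]]] // ?; congr (W _); apply/val_inj.
Qed.

Lemma below_bm2 v w v' w' :
  below (bm2 v' w') (bm2 v w) = [forall i, v' i ==> v i] && [forall i, w' i ==> w i].
Proof.
apply/belowP/andP => [le_vw | [/forallP le_v /forallP le_w] l i].
  split; apply/forallP => i; apply/implyP.
    by move: (le_vw ord0 i); rewrite !ffunE.
  by move: (le_vw ord_max i); rewrite !ffunE.
by rewrite !ffunE; case: eqP => _; apply/implyP.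
Qed.

Lemma sums_to_one_bm2 v' w' :
  sums_to_one (bm2 v' w') = [forall i, (v' i + w' i == 1)%N].
Proof. by apply: eq_forallb => i; rewrite !big_ord_recl big_ord0 !ffunE addn0. Qed.

Lemma homol_xat_mul v w x y :
  homol (xat x v * xat y w)
    (\sum_(v' : bv n | [forall i, v' i ==> v i])
       \sum_(w' : bv n | [forall i, w' i ==> w i] && [forall i, (v' i + w' i == 1)%N])
         xat x v' * xat y w').
Proof.
pose X (l : 'I_2) := if l == ord0 then x else y.
have xprod_bm2 v' w' : xprod X (bm2 v' w') = xat x v' * xat y w'.
  by rewrite /xprod big_ord_recl big_ord1 !ffunE.
have := boundary_xprod_sub_xsum X n_gt0 (bm2 v w); rewrite xprod_bm2 homolE.
congr (boundary (_ - _)); rewrite pair_big_dep /xsum (reindex _ (onW_bij _ bm2_bij)) /=.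
apply: eq_big => [[v' w'] | [v' w'] _]; last exact: xprod_bm2.
by rewrite below_bm2 sums_to_one_bm2 andbA.
Qed.

Lemma homol_xat_Xn k :
  homol (xat ('X ^+ k) (bv_one n))
    (\sum_(ws : {ffun 'I_k -> bv n} |
             [forall l, bv_nz (ws l)] &&
             [forall i, (\sum_(l < k) nat_of_bool (ws l i) == 1)%N])
       \prod_(l < k) xat 'X (ws l)).
Proof.
pose V : {ffun 'I_k -> bv n} := [ffun => bv_one n].
have := boundary_xprod_sub_xsum (fun _ => 'X) n_gt0 V; rewrite homolE.
have -> : xprod (fun _ => 'X) V = xat ('X ^+ k) (bv_one n).
  by rewrite /xprod; under eq_bigr do rewrite ffunE; rewrite prodr_const card_ord xatXn.
congr (boundary (_ - _)); rewrite /xsum big_mkcond [RHS]big_mkcond; apply: eq_bigr => W _.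
have -> : below W V by apply/belowP => l i _; rewrite !ffunE.
rewrite -/(sums_to_one W) andbC /=; case: (sums_to_one W); rewrite ?andbF ?andbT //.
case: ifP => // /negbT /forallPn[l W_l0].
by rewrite /xprod (bigD1 l) //= xatX_eq0 ?mul0r.
Qed.

Lemma homol_xat_Xn_gt k : (n < k)%N -> homol (xat ('X ^+ k) (bv_one n)) 0.
Proof.
move=> n_lt_k; have := homol_xat_Xn k; rewrite big_pred0 // => W.
apply/negbTE/andP => -[W_nz W_one]; have [f [f_inj _]] := nz_rows_injection W_nz W_one.
by have := leq_card f f_inj; rewrite !card_ord leqNgt n_lt_k.
Qed.

Definition perm_rows (s : {perm 'I_n}) : {ffun 'I_n -> bv n} := [ffun l => bv_e (s l)].

Lemma perm_rows_inj : injective perm_rows.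
Proof.
move=> s1 s2 eq_s; apply/permP => l.
have := congr1 (fun W : {ffun 'I_n -> bv n} => W l (s1 l)) eq_s.
by rewrite !ffunE eqxx => /esym/eqP.
Qed.

Lemma nz_rows_sums_to_one_perm (W : {ffun 'I_n -> bv n}) :
  [forall l, bv_nz (W l)] && sums_to_one W = (W \in perm_rows @: setT).
Proof.
apply/andP/imsetP => [[W_nz W_one] | [s _ ->]].
  have [f [f_inj W_f]] := nz_rows_injection W_nz W_one.
  exists (perm f_inj) => //; apply/ffunP => l; apply/ffunP => i; rewrite !ffunE permE.
  apply/idP/eqP => [W_li | ->]; last exact: W_f.
  have [l0 W_i] := sums_to_oneP i W_one; pose l' := (perm f_inj)^-1%g i.
  have f_l' : f l' = i by rewrite -[RHS](permKV (perm f_inj)) permE.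
  by move: (W_f l') W_li; rewrite f_l' !W_i => /eqP <- /eqP ->.
split; first by apply/forallP => l; apply/existsP; exists (s l); rewrite !ffunE.
apply/forallP => i; apply/sum_nat_of_bool_eq1P; exists (s^-1 i)%g => l.
by rewrite !ffunE; apply/eqP/eqP => [-> | ->]; rewrite ?permK ?permKV.
Qed.

Lemma homol_xat_Xn_fact :
  homol (xat ('X ^+ n) (bv_one n)) (n`!%:R * \prod_(i < n) xat 'X (bv_e i)).
Proof.
have := homol_xat_Xn n; rewrite (eq_bigl _ _ nz_rows_sums_to_one_perm).
rewrite big_imset /=; last by move=> s1 s2 _ _; apply: perm_rows_inj.
have prod_perm (s : {perm 'I_n}) :
    \prod_(l < n) xat 'X (perm_rows s l) = \prod_(i < n) xat 'X (bv_e i).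
  by rewrite [RHS](reindex_inj (@perm_inj _ s)); apply: eq_bigr => l _; rewrite ffunE.
by under eq_bigr do rewrite prod_perm; rewrite sumr_const cardsT card_Sn mulr_natl.
Qed.

End Proposition.

Theorem proposition4p9 (n : nat) (hn : (1 <= n)%N) :
  (* (1) *)
  (forall (v w : bv n) (x y : {poly rat}) (i : 'I_n),
      v i = false -> w i = false -> homol (xat x v * xat y w) 0) /\
  (forall (v : bv n) (x : {poly rat}), v != bv_one n -> homol (xat x v) 0) /\
  (* (2) *)
  (forall (v w : bv n) (x y : {poly rat}),
      homol (xat x v * xat y w)
        (\sum_(v' : bv n | [forall i, v' i ==> v i])
           \sum_(w' : bv n | [forall i, w' i ==> w i] &&
                             [forall i, (v' i + w' i == 1)%N])
              xat x v' * xat y w')) /\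
  (* (3) *)
  (forall k : nat, (1 <= k)%N ->
      homol (xat ('X ^+ k) (bv_one n))
        (\sum_(ws : {ffun 'I_k -> bv n} |
                 [forall l, bv_nz (ws l)] &&
                 [forall i, (\sum_(l < k) nat_of_bool (ws l i) == 1)%N])
           \prod_(l < k) xat 'X (ws l))) /\
  homol (xat ('X ^+ n) (bv_one n)) (n`!%:R * \prod_(i < n) xat 'X (bv_e i)) /\
  (forall k : nat, (n < k)%N -> homol (xat ('X ^+ k) (bv_one n)) 0).
Proof.
split; first exact: homol_xat_mul_clear.
split; first exact: homol_xat_neq_one.
split; first exact: homol_xat_mul.
split; first by move=> k _; exact: homol_xat_Xn.
split; first exact: homol_xat_Xn_fact.
exact: homol_xat_Xn_gt.
Qed.
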